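(* Let $x \in \mathbb{R}^n$ and let $(B_i)_{i \geq 1}$ be a sequence of open balls in $\mathbb{R}^n$ with unbounded radii such that $x \in B_i$ for every $i$. Then $B = \bigcup_{i \geq 1} B_i$ contains an open halfspace $H$ with $x \in \mathrm{bd}(H)$.
   Context: $\mathrm{bd}(X) = \overline{X} \cap \overline{\mathbb{R}^n \setminus X}$ denotes the topological boundary of $X \subseteq \mathbb{R}^n$. An open halfspace is a set of the form $\{y \in \mathbb{R}^n : a\cdot y > b\}$ with $a \neq 0$. *)

(* R^n is 'rV[R]_n for R : realType. *)
From HB Require Import structures.
From mathcomp Require Import all_boot all_order all_algebra.
From mathcomp Require Import all_classical all_reals all_analysis.
Set Implicit Arguments. Unset Strict Implicit. Unset Printing Implicit Defensive.
Import Order.TTheory GRing.Theory Num.Theory.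
Import numFieldNormedType.Exports.
Local Open Scope classical_set_scope.
Local Open Scope ring_scope.

Definition dotv (R : realType) (n : nat) (a y : 'rV[R]_n) : R :=
  \sum_(i < n) a 0 i * y 0 i.

Definition enorm (R : realType) (n : nat) (v : 'rV[R]_n) : R :=
  Num.sqrt (dotv v v).

Definition eball (R : realType) (n : nat) (c : 'rV[R]_n) (r : R) : set 'rV[R]_n :=
  [set y | enorm (y - c) < r].

Definition open_halfspace (R : realType) (n : nat) (H : set 'rV[R]_n) : Prop :=
  exists (a : 'rV[R]_n) (b : R), a != 0 /\ H = [set y | b < dotv a y].

(* topological boundary bd(X) = cl(X) /\ cl(R^n \ X); the topology on 'rV[R]_n is
   the product topology, which coincides with the Euclidean one. *)
Definition bd (R : realType) (n : nat) (X : set 'rV[R]_n) : set 'rV[R]_n :=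
  closure X `&` closure (~` X).

From HB Require Import structures.
From mathcomp Require Import all_boot all_order all_algebra.
From mathcomp Require Import all_classical all_reals all_analysis.
From mathcomp Require Import lra.
Set Implicit Arguments. Unset Strict Implicit. Unset Printing Implicit Defensive.
Import Order.TTheory GRing.Theory Num.Theory.
Import numFieldNormedType.Exports.
Local Open Scope classical_set_scope.
Local Open Scope ring_scope.

(* Let u_i be a unit vector pointing from x to the centre c_i of B_i.  By
   compactness, along radii tending to infinity the u_i accumulate at some
   a <> 0; the halfspace H = {y | a.y > a.x} has x on its boundary.  For y in H
   and w = y - x, the accumulation gives w.u_i >= (a.w)/2 > 0 for suitable i
   with r_i arbitrarily large: either c_i is near x and then the huge radius
   r_i covers y, or c_i is far from x in a direction at an acute angle with w,
   and then |y - c_i| < |x - c_i| < r_i. *)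

Section Euclidean.
Variables (R : realType) (n : nat).
Implicit Types (a v w z : 'rV[R]_n).

Lemma dotvC a v : dotv a v = dotv v a.
Proof. by apply: eq_bigr => i _; rewrite mulrC. Qed.

Lemma dotvDr a v w : dotv a (v + w) = dotv a v + dotv a w.
Proof.
by rewrite /dotv -big_split; apply: eq_bigr => i _; rewrite !mxE mulrDr.
Qed.

Lemma dotvNr a v : dotv a (- v) = - dotv a v.
Proof. by rewrite /dotv -sumrN; apply: eq_bigr => i _; rewrite !mxE mulrN. Qed.

Lemma dotvBr a v w : dotv a (v - w) = dotv a v - dotv a w.
Proof. by rewrite dotvDr dotvNr. Qed.

Lemma dotvZr a v (k : R) : dotv a (k *: v) = k * dotv a v.
Proof.
by rewrite /dotv mulr_sumr; apply: eq_bigr => i _; rewrite !mxE mulrCA.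
Qed.

Lemma dotvDl a v w : dotv (v + w) a = dotv v a + dotv w a.
Proof. by rewrite dotvC dotvDr !(dotvC a). Qed.

Lemma dotvBl a v w : dotv (v - w) a = dotv v a - dotv w a.
Proof. by rewrite !(dotvC _ a) dotvBr. Qed.

Lemma dotvZl a v (k : R) : dotv (k *: v) a = k * dotv v a.
Proof. by rewrite !(dotvC _ a) dotvZr. Qed.

Lemma dotv_ge0 v : 0 <= dotv v v.
Proof. by apply: sumr_ge0 => i _; rewrite -expr2 sqr_ge0. Qed.

Lemma sqr_coord_le_dotv v j : v 0 j ^+ 2 <= dotv v v.
Proof.
rewrite /dotv (bigD1 j) //= expr2 lerDl.
by apply: sumr_ge0 => i _; rewrite -expr2 sqr_ge0.
Qed.

Lemma dotv_eq0 v : (dotv v v == 0) = (v == 0).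
Proof.
apply/idP/eqP => [|->]; last by rewrite /dotv big1 // => i _; rewrite mxE mul0r.
move=> /eqP v0; apply/rowP => j; rewrite mxE; apply/eqP.
by rewrite -sqrf_eq0 eq_le sqr_ge0 andbT -v0 sqr_coord_le_dotv.
Qed.

Lemma dotv_gt0 v : (0 < dotv v v) = (v != 0).
Proof. by rewrite lt_def dotv_ge0 andbT dotv_eq0. Qed.

Lemma enorm_sqr v : enorm v ^+ 2 = dotv v v.
Proof. by rewrite /enorm sqr_sqrtr // dotv_ge0. Qed.

Lemma enormN v : enorm (- v) = enorm v.
Proof. by rewrite /enorm dotvNr dotvC dotvNr opprK. Qed.

Lemma enorm_ltE v (r : R) : 0 < r -> (enorm v < r) = (dotv v v < r ^+ 2).
Proof.
move=> r0; rewrite /enorm -{1}(ger0_norm (ltW r0)) -sqrtr_sqr.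
by rewrite ltr_sqrt ?exprn_gt0.
Qed.

Lemma norm_coord_le v j : `|v 0 j| <= `|v|.
Proof.
rewrite [leRHS]/Num.Def.normr /= mx_normrE.
exact: le_trans (le_bigmax _ _ (0, j)).
Qed.

Lemma mx_norm_sqr_le_dotv v : `|v| ^+ 2 <= dotv v v.
Proof.
rewrite -[leRHS]sqr_sqrtr ?dotv_ge0 // lerXn2r ?nnegrE ?sqrtr_ge0 //.
rewrite [leLHS]/Num.Def.normr /= mx_normrE.
apply: bigmax_le => [|[i j] _]; first exact: sqrtr_ge0.
rewrite /= (ord1 i) -[leLHS]sqrtr_sqr ler_sqrt ?dotv_ge0 //.
exact: sqr_coord_le_dotv.
Qed.

Lemma dotv_le_mx_norm v : dotv v v <= n%:R * `|v| ^+ 2.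
Proof.
rewrite mulr_natl -[n in _ *+ n]card_ord -sumr_const; apply: ler_sum => j _.
by rewrite -expr2 -real_normK ?num_real // lerXn2r ?norm_coord_le // nnegrE.
Qed.

Lemma norm_dotv_le w v : `|dotv w v| <= (\sum_(j < n) `|w 0 j|) * `|v|.
Proof.
rewrite mulr_suml; apply: le_trans (ler_norm_sum _ _ _) _.
by apply: ler_sum => j _; rewrite normrM ler_wpM2l ?norm_coord_le.
Qed.

(* A near centre is handled by |w - z|^2 <= 2|w|^2 + 2|z|^2; a far one, with
   |z| > |w|^2 / s, gives |w - z|^2 <= |w|^2 - s|z| + |z|^2 < |z|^2. *)
Lemma enormB_lt_of_far w z (s r : R) : 0 < s -> enorm z < r ->
  s * enorm z <= 2 * dotv w z ->
  2 * (dotv w w + (dotv w w / s) ^+ 2) < r ^+ 2 ->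
  enorm (w - z) < r.
Proof.
move=> s0 zr wz r_big.
have d0 : 0 <= enorm z := sqrtr_ge0 _.
have r0 : 0 < r := le_lt_trans d0 zr.
have wDz_ge0 := dotv_ge0 (w + z).
rewrite dotvDl !dotvDr (dotvC z w) -(enorm_sqr z) in wDz_ge0.
rewrite enorm_ltE // dotvBl !dotvBr (dotvC z w) -(enorm_sqr z).
have [near | far] := leP (enorm z) (dotv w w / s).
- have : enorm z ^+ 2 <= (dotv w w / s) ^+ 2.
    by rewrite lerXn2r // nnegrE // (le_trans d0 near).
  lra.
- rewrite ltr_pdivrMr // in far.
  nra.
Qed.

End Euclidean.

Lemma unit_direction (R : realType) n (v : 'rV[R]_n) : (0 < n)%N ->
  exists u : 'rV[R]_n, dotv u u = 1 /\ v = enorm v *: u.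
Proof.
move=> n0; have [->|v0] := eqVneq v 0.
  exists (delta_mx 0 (Ordinal n0)); split.
    rewrite /dotv (bigD1 (Ordinal n0)) //= big1 => [|j /negbTE nj].
      by rewrite !mxE !eqxx mulr1 addr0.
    by rewrite !mxE nj mul0r.
  by rewrite /enorm /dotv big1 ?sqrtr0 ?scale0r // => i _; rewrite mxE mul0r.
have d0 : 0 < enorm v by rewrite sqrtr_gt0 dotv_gt0.
exists ((enorm v)^-1 *: v); split.
  rewrite dotvZl dotvZr -enorm_sqr mulrA -expr2 -exprMn.
  by rewrite mulVf ?expr1n // gt_eqF.
by rewrite scalerA divff ?scale1r // gt_eqF.
Qed.

Lemma bounded_seq_cluster (R : realType) n (v : nat -> 'rV[R]_n) (b : R) :
  (forall k, `|v k| <= b) ->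
  exists a, forall (e : R) N, 0 < e -> exists2 k, (N <= k)%N & `|v k - a| < e.
Proof.
move=> vb.
pose K := closed_ball_ Num.norm (0 : 'rV[R]_n) b.
have K_compact : compact K.
  apply: bounded_closed_compact; last exact: closed_closed_ball_.
  rewrite /= /bounded_near; near=> M => y.
  rewrite /K /closed_ball_ /= sub0r normrN => yb; apply: le_trans yb _.
  by near: M; apply: nbhs_pinfty_ge; exact: num_real.
have vK : (v @ \oo) K.
  by apply: (@filterE _ \oo) => k; rewrite /K /closed_ball_ /= sub0r normrN.
have [a [_ a_cluster]] := K_compact _ _ vK.
exists a => e N e0.
have v_tail : (v @ \oo) (v @` [set k | (N <= k)%N]).
  by exists N => // k Nk; exists k.
have [_ [[k Nk <-] vk_near_a]] := a_cluster _ _ v_tail (nbhsx_ballx a e e0).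
by exists k => //; rewrite distrC; rewrite -ball_normE in vk_near_a.
Unshelve. all: by end_near.
Qed.

Lemma unbounded_unit_direction (R : realType) n
    (u : nat -> 'rV[R]_n) (r : nat -> R) :
  (forall i, dotv (u i) (u i) = 1) -> (forall M, exists i, M < r i) ->
  exists2 a : 'rV[R]_n, a != 0 &
    forall e M : R, 0 < e -> exists2 i, M < r i & `|u i - a| < e.
Proof.
move=> u_unit r_unb.
have [I rI] := boolp.choice (fun k : nat => r_unb k%:R).
have u_le1 i : `|u i| <= 1.
  by rewrite -(expr_le1 (_ : 0 < 2)%N) // -(u_unit i) mx_norm_sqr_le_dotv.
have [a a_cluster] := bounded_seq_cluster (fun k => u_le1 (I k)).
exists a.
- (* a unit vector has sup norm at least 1 / sqrt n *)
  apply/eqP => a0.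
  pose e : R := (n%:R + 1)^-1.
  have n_ge0 : 0 <= n%:R :> R := ler0n _ _.
  have e0 : 0 < e by rewrite invr_gt0; lra.
  have e_inv : e * (n%:R + 1) = 1 by rewrite mulVf //; apply/eqP; lra.
  have [k _] := a_cluster e 0%N e0; rewrite a0 subr0 => uk_small.
  have := dotv_le_mx_norm (u (I k)); rewrite u_unit.
  have := normr_ge0 (u (I k)).
  nra.
- move=> e M e0; have [k Mk uk_near_a] := a_cluster e (Num.truncn M).+1 e0.
  exists (I k) => //; apply: lt_trans (rI k).
  by apply: lt_le_trans (truncnS_gt M) _; rewrite ler_nat.
Qed.

Lemma halfspace_sub_unbounded_balls (R : realType) n (x a : 'rV[R]_n)
    (c u : nat -> 'rV[R]_n) (r : nat -> R) :
  (forall i, eball (c i) (r i) x) ->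
  (forall i, c i - x = enorm (c i - x) *: u i) ->
  (forall e M : R, 0 < e -> exists2 i, M < r i & `|u i - a| < e) ->
  [set y | dotv a x < dotv a y] `<=` \bigcup_i eball (c i) (r i).
Proof.
move=> x_in dir_u u_to_a y /= ax_lt_ay.
set w := y - x.
have s0 : 0 < dotv a w by rewrite dotvBr subr_gt0.
set s := dotv a w; set t := dotv w w; set S := \sum_(j < n) `|w 0 j|.
have S0 : 0 <= S by exact: sumr_ge0.
pose e := s / (2 * (S + 1)).
have e0 : 0 < e by rewrite divr_gt0 //; lra.
have Se_small : S * e <= s / 2.
  have : e * (2 * (S + 1)) = s by rewrite mulfVK //; apply/eqP; lra.
  nra.
have [i r_big ui_near_a] := u_to_a e (1 + 2 * (t + (t / s) ^+ 2)) e0.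
exists i => //; rewrite /eball /=.
have -> : y - c i = w - (c i - x) by rewrite opprB addrA subrK.
apply: (enormB_lt_of_far (s := s)) => //.
- by rewrite -enormN opprB; exact: x_in.
- have wu_near_s : `|dotv w (u i) - s| <= s / 2.
    have -> : dotv w (u i) - s = dotv w (u i - a).
      by rewrite dotvBr /s (dotvC a w).
    apply: le_trans (norm_dotv_le _ _) _.
    by apply: le_trans Se_small; rewrite ler_wpM2l // ltW.
  move: wu_near_s; rewrite ler_norml => /andP[wu_ge _].
  rewrite {2}dir_u dotvZr.
  have := sqrtr_ge0 (dotv (c i - x) (c i - x)).
  rewrite -/(enorm _); nra.
- rewrite -/t.
  have : 0 <= t + (t / s) ^+ 2 by rewrite addr_ge0 ?sqr_ge0 ?dotv_ge0.
  nra.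
Qed.

Lemma halfspace_bd (R : realType) n (a x : 'rV[R]_n) :
  a != 0 -> bd [set y | dotv a x < dotv a y] x.
Proof.
move=> a0; split; last by apply: subset_closure; rewrite /= ltxx.
move=> B /nbhs_ballP [e /= e0 Be].
have aa0 : 0 < dotv a a by rewrite dotv_gt0.
pose d := e / (`|a| + 1).
have a_ge0 := normr_ge0 a.
have d0 : 0 < d by rewrite divr_gt0 //; lra.
have d_a : d * (`|a| + 1) = e by rewrite mulfVK //; apply/eqP; lra.
exists (x + d *: a); split.
- by rewrite /= dotvDr dotvZr ltrDl mulr_gt0.
- apply: Be; rewrite -ball_normE /= opprD addrA subrr sub0r normrN.
  rewrite normrZ gtr0_norm //; nra.
Qed.

Theorem lemma1 (R : realType) (n : nat) (hn : (0 < n)%N) (x : 'rV[R]_n)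
    (c : nat -> 'rV[R]_n) (r : nat -> R)
    (hr : forall i, 0 < r i)
    (hunb : forall M : R, exists i, M < r i)
    (hx : forall i, eball (c i) (r i) x) :
  exists H : set 'rV[R]_n,
    open_halfspace H /\ H `<=` \bigcup_i eball (c i) (r i) /\ bd H x.
Proof.
have [u dir_u] := boolp.choice (fun i => unit_direction (c i - x) hn).
have [a a0 a_dir] := unbounded_unit_direction (fun i => (dir_u i).1) hunb.
exists [set y | dotv a x < dotv a y]; split; first by exists a, (dotv a x).
split; last exact: halfspace_bd.
exact: halfspace_sub_unbounded_balls hx (fun i => (dir_u i).2) a_dir.
Qed.
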